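(* Let $R>0$ and, for $d\ge0$, $r\ge0$, $$f(d,r)=\begin{cases}2r/R^2,&r\le R-d,\\0,&r>R+d\text{ or }r<d-R,\\\frac{2r}{\pi R^2}\arccos\Big(\frac{d^2+r^2-R^2}{2dr}\Big),&\text{otherwise.}\end{cases}$$ Then for any $d\ge0$ the function $f(d,\cdot)$ is concave on its support intersected with $[R,\infty)$. If in addition $d\ge R$, then $f(d,\cdot)$ is concave on its full support $[d-R,d+R]$.
   Context: $f(d,r)$ is the derivative in $r$ of $|B_r(0)\cap B_R(\mathbf{y})|/(\pi R^2)$ for $|\mathbf{y}|=d$ (the one-particle profile). *)

From Stdlib Require Import Reals Lra.
Open Scope R_scope.

Definition f_prof (RR d r : R) : R :=
  if Rle_dec r (RR - d) then 2 * r / RR ^ 2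
  else if Rlt_dec (RR + d) r then 0
  else if Rlt_dec r (d - RR) then 0
  else 2 * r / (PI * RR ^ 2) * acos ((d ^ 2 + r ^ 2 - RR ^ 2) / (2 * d * r)).

Definition prof_support (RR d r : R) : Prop :=
  0 <= r /\ d - RR <= r /\ r <= d + RR.

Definition concave_on (S : R -> Prop) (g : R -> R) : Prop :=
  forall x y t, S x -> S y -> 0 <= t <= 1 ->
    t * g x + (1 - t) * g y <= g (t * x + (1 - t) * y).

(* For r strictly between |d - R| and d + R, f(d, r) is a positive multiple of
   h(r) = r * theta(r), where theta = arccos ((d^2 + r^2 - R^2) / (2 d r)) is the
   half angle of the arc of the circle of radius r lying in B_R(y).  Writing
   K = d^2 + r^2 - R^2 and D = 4 d^2 r^2 - K^2 > 0, a direct computation gives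
   h''(r) = - (K (K - 2 r^2)^2 + 2 r^2 D) / (r D sqrt D), which is <= 0 as soon as
   K >= 0, i.e. theta <= pi/2.  This holds on [max(R, d - R), d + R] for every
   d > 0, and on all of [d - R, d + R] when d >= R.  By the mean value theorem a
   nonincreasing h' makes h concave, and the endpoints are included because h is
   continuous there (theta -> 0 at r = d +- R, and h -> 0 at r = 0 when d = R). *)

From Stdlib Require Import Reals Psatz.
From Coquelicot Require Import Coquelicot.
Open Scope R_scope.

Lemma MVT_open (f df : R -> R) (a b : R) : a < b ->
  (forall x, a < x < b -> is_derive f x (df x)) ->
  (forall x, a <= x <= b -> continuity_pt f x) ->
  exists c, a < c < b /\ f b - f a = df c * (b - a).
Proof.
intros ab f_df f_cont.
assert (f_der : forall x, a < x < b -> derivable_pt f x).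
{ intros x Hx; exists (df x); apply is_derive_Reals, f_df, Hx. }
destruct (MVT f id a b f_der (fun x _ => derivable_pt_id x) ab f_cont
  (fun x _ => derivable_continuous_pt id x (derivable_pt_id x))) as [c [Hc E]].
exists c; split; [exact Hc|].
rewrite derive_pt_id, (derive_pt_eq_0 f c (df c) (f_der c Hc)) in E;
  [unfold id in E; lra | apply is_derive_Reals, f_df, Hc].
Qed.

Lemma nonincreasing_of_derive_nonpos (f df : R -> R) (a b : R) :
  (forall x, a < x < b -> is_derive f x (df x)) ->
  (forall x, a < x < b -> df x <= 0) ->
  forall x y, a < x -> x <= y -> y < b -> f y <= f x.
Proof.
intros f_df df_nonpos x y ax xy yb.
destruct (Req_dec x y) as [<-|]; [lra|].
destruct (MVT_open f df x y) as [c [Hc E]]; [lra | intros z Hz; apply f_df; lra | |].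
- intros z Hz; apply derivable_continuous_pt; exists (df z).
  apply is_derive_Reals, f_df; lra.
- assert (df c <= 0) by (apply df_nonpos; lra).
  nra.
Qed.

Lemma concave_on_point (S : R -> Prop) (g : R -> R) (p : R) :
  (forall x, S x -> x = p) -> concave_on S g.
Proof.
intros Sp x y t Sx Sy _; rewrite (Sp x Sx), (Sp y Sy).
replace (t * p + (1 - t) * p) with p by ring; lra.
Qed.

Lemma concave_on_subset (S S' : R -> Prop) (g : R -> R) :
  (forall x, S' x -> S x) -> concave_on S g -> concave_on S' g.
Proof. intros sub g_conc x y t Sx Sy Ht; apply g_conc; auto. Qed.

Lemma concave_on_scal (S : R -> Prop) (g : R -> R) (k : R) :
  0 <= k -> concave_on S g -> concave_on S (fun x => k * g x).
Proof.
intros k_ge0 g_conc x y t Sx Sy Ht.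
pose proof (g_conc x y t Sx Sy Ht); nra.
Qed.

Lemma concave_on_interval_ext (g h : R -> R) (a b : R) :
  (forall x, a <= x <= b -> g x = h x) ->
  concave_on (fun x => a <= x <= b) h -> concave_on (fun x => a <= x <= b) g.
Proof.
intros gh h_conc x y t Hx Hy Ht.
rewrite !gh; [apply h_conc; auto | nra | lra | lra].
Qed.

Section ConcaveOfDeriveNonincreasing.

Variables (h dh : R -> R) (a b : R).
Hypothesis h_cont : forall x, a <= x <= b -> continuity_pt h x.
Hypothesis h_dh : forall x, a < x < b -> is_derive h x (dh x).
Hypothesis dh_nonincr : forall x y, a < x -> x <= y -> y < b -> dh y <= dh x.

Lemma concave_on_interval_lt x y t : a <= x -> x < y -> y <= b -> 0 < t < 1 ->
  t * h x + (1 - t) * h y <= h (t * x + (1 - t) * y).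
Proof.
intros ax xy yb Ht.
set (z := t * x + (1 - t) * y).
assert (Hz : x < z < y) by (unfold z; nra).
destruct (MVT_open h dh x z) as [c1 [Hc1 E1]];
  [lra | intros; apply h_dh; lra | intros; apply h_cont; lra |].
destruct (MVT_open h dh z y) as [c2 [Hc2 E2]];
  [lra | intros; apply h_dh; lra | intros; apply h_cont; lra |].
assert (slopes : dh c2 <= dh c1) by (apply dh_nonincr; lra).
replace (z - x) with ((1 - t) * (y - x)) in E1 by (unfold z; ring).
replace (y - z) with (t * (y - x)) in E2 by (unfold z; ring).
assert (0 <= t * (1 - t) * (y - x)) by (apply Rmult_le_pos; nra).
nra.
Qed.

Lemma concave_on_interval : concave_on (fun x => a <= x <= b) h.
Proof.
intros x y t [ax xb] [ay yb] Ht.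
destruct (Req_dec t 0) as [->|].
{ replace (0 * x + (1 - 0) * y) with y by ring; lra. }
destruct (Req_dec t 1) as [->|].
{ replace (1 * x + (1 - 1) * y) with x by ring; lra. }
destruct (Rtotal_order x y) as [xy|[<-|yx]].
- apply concave_on_interval_lt; lra.
- replace (t * x + (1 - t) * x) with x by ring; lra.
- replace (t * x + (1 - t) * y) with ((1 - t) * y + (1 - (1 - t)) * x) by ring.
  pose proof (concave_on_interval_lt y x (1 - t) ay yx xb ltac:(lra)); lra.
Qed.

End ConcaveOfDeriveNonincreasing.

Lemma is_derive_acos x : -1 < x < 1 -> is_derive acos x (-1 / sqrt (1 - x²)).
Proof.
intros Hx; apply is_derive_Reals.
apply (derive_pt_eq_1 _ _ _ (derivable_pt_acos x Hx)), derive_pt_acos.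
Qed.

Lemma continuity_pt_acos x : -1 < x <= 1 -> continuity_pt acos x.
Proof.
intros Hx; destruct (Req_dec x 1) as [->|].
- (* Around 1, [acos_atan] writes [acos] as a composite of continuous functions. *)
  apply (continuity_pt_locally_ext (fun y => atan (sqrt (1 - y²) / y)) _ 1);
    [lra | intros y Hy; unfold Rdist in Hy; apply Rabs_def2 in Hy;
           symmetry; apply acos_atan; lra |].
  apply (continuity_pt_comp (fun y => sqrt (1 - y²) / y) atan).
  + apply continuity_pt_div; [| apply continuity_pt_id | lra].
    apply (continuity_pt_comp (fun y => 1 - y²) sqrt).
    * apply continuity_pt_minus; [apply continuity_pt_const; intros ?; reflexivity|].
      apply derivable_continuous_pt, derivable_pt_Rsqr.
    * apply continuity_pt_sqrt; unfold Rsqr; lra.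
  + apply derivable_continuous_pt, derivable_pt_atan.
- apply derivable_continuous_pt, derivable_pt_acos; lra.
Qed.

Definition cos_half_angle (RR d r : R) : R := (d ^ 2 + r ^ 2 - RR ^ 2) / (2 * d * r).
Definition half_arc (RR d r : R) : R := r * acos (cos_half_angle RR d r).
Definition lens_disc (RR d r : R) : R := 4 * d ^ 2 * r ^ 2 - (d ^ 2 + r ^ 2 - RR ^ 2) ^ 2.

Definition half_arc_derive (RR d r : R) : R :=
  acos (cos_half_angle RR d r) - (r ^ 2 - d ^ 2 + RR ^ 2) / sqrt (lens_disc RR d r).

Definition half_arc_derive2 (RR d r : R) : R :=
  let K := d ^ 2 + r ^ 2 - RR ^ 2 in
  - (K * (K - 2 * r ^ 2) ^ 2 + 2 * r ^ 2 * lens_disc RR d r)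
    / (r * lens_disc RR d r * sqrt (lens_disc RR d r)).

Section OpenLens.

Variables (RR d r : R).
Hypotheses (RR_gt0 : 0 < RR) (d_gt0 : 0 < d) (r_lens : Rabs (d - RR) < r < d + RR).

Lemma lens_r_gt0 : 0 < r.
Proof. pose proof (Rabs_pos (d - RR)); lra. Qed.

Lemma lens_disc_gt0 : 0 < lens_disc RR d r.
Proof.
destruct r_lens as [lo hi]; apply Rabs_def2 in lo.
replace (lens_disc RR d r) with ((RR ^ 2 - (r - d) ^ 2) * ((r + d) ^ 2 - RR ^ 2))
  by (unfold lens_disc; ring).
apply Rmult_lt_0_compat; nra.
Qed.

Lemma cos_half_angle_bound : -1 < cos_half_angle RR d r < 1.
Proof.
pose proof lens_r_gt0; destruct r_lens as [lo hi]; apply Rabs_def2 in lo.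
unfold cos_half_angle; assert (0 < 2 * d * r) by nra; split.
- apply Rlt_div_r; nra.
- apply Rlt_div_l; nra.
Qed.

Lemma sqrt_1_minus_cos_half_angle_sqr :
  sqrt (1 - (cos_half_angle RR d r)²) = sqrt (lens_disc RR d r) / (2 * d * r).
Proof.
pose proof lens_r_gt0; pose proof lens_disc_gt0.
rewrite <- (sqrt_pow2 (sqrt (lens_disc RR d r) / (2 * d * r)))
  by (apply Rdiv_le_0_compat; [apply sqrt_pos | nra]).
f_equal; unfold Rdiv; rewrite Rpow_mult_distr, pow2_sqrt by lra.
unfold cos_half_angle, lens_disc, Rsqr; field; lra.
Qed.

Lemma is_derive_acos_cos_half_angle :
  is_derive (fun r => acos (cos_half_angle RR d r)) r
    (- (r ^ 2 - d ^ 2 + RR ^ 2) / (r * sqrt (lens_disc RR d r))).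
Proof.
pose proof lens_r_gt0; pose proof lens_disc_gt0.
assert (sqrt_gt0 : 0 < sqrt (lens_disc RR d r)) by (apply sqrt_lt_R0; lra).
assert (du : is_derive (cos_half_angle RR d) r ((r ^ 2 - d ^ 2 + RR ^ 2) / (2 * d * r ^ 2))).
{ unfold cos_half_angle; auto_derive; [nra | field; lra]. }
replace (- (r ^ 2 - d ^ 2 + RR ^ 2) / (r * sqrt (lens_disc RR d r)))
  with (scal ((r ^ 2 - d ^ 2 + RR ^ 2) / (2 * d * r ^ 2))
             (-1 / sqrt (1 - (cos_half_angle RR d r)²))).
- exact (is_derive_comp acos _ r _ _ (is_derive_acos _ cos_half_angle_bound) du).
- rewrite sqrt_1_minus_cos_half_angle_sqr; unfold scal; simpl; unfold mult; simpl.
  field; repeat split; lra.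
Qed.

Lemma is_derive_half_arc : is_derive (half_arc RR d) r (half_arc_derive RR d r).
Proof.
pose proof lens_r_gt0.
assert (sqrt_gt0 : 0 < sqrt (lens_disc RR d r)) by (apply sqrt_lt_R0, lens_disc_gt0).
apply (is_derive_ext (fun t => mult t (acos (cos_half_angle RR d t)))); [reflexivity|].
replace (half_arc_derive RR d r) with
  (plus (mult 1 (acos (cos_half_angle RR d r)))
        (mult r (- (r ^ 2 - d ^ 2 + RR ^ 2) / (r * sqrt (lens_disc RR d r)))))
  by (unfold half_arc_derive, plus, mult; simpl; field; lra).
apply (is_derive_mult (fun t => t) (fun t => acos (cos_half_angle RR d t)));
  [exact (is_derive_id r) | apply is_derive_acos_cos_half_angle |].
intros; apply Rmult_comm.
Qed.

Lemma is_derive_half_arc_derive :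
  is_derive (half_arc_derive RR d) r (half_arc_derive2 RR d r).
Proof.
pose proof lens_r_gt0; pose proof lens_disc_gt0 as disc_gt0.
assert (sqrt_gt0 : 0 < sqrt (lens_disc RR d r)) by (apply sqrt_lt_R0; lra).
assert (dD : is_derive (lens_disc RR d) r (4 * r * (d ^ 2 - r ^ 2 + RR ^ 2)))
  by (unfold lens_disc; auto_derive; [exact I | ring]).
assert (dN : is_derive (fun t => t ^ 2 - d ^ 2 + RR ^ 2) r (2 * r))
  by (auto_derive; [exact I | ring]).
pose proof (is_derive_div _ _ r _ _ dN (is_derive_sqrt _ _ _ dD disc_gt0) ltac:(lra)) as dB.
cbv beta in dB; rewrite pow2_sqrt in dB by lra.
replace (half_arc_derive2 RR d r) with
  (minus (- (r ^ 2 - d ^ 2 + RR ^ 2) / (r * sqrt (lens_disc RR d r)))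
     ((2 * r * sqrt (lens_disc RR d r) - (r ^ 2 - d ^ 2 + RR ^ 2)
         * (4 * r * (d ^ 2 - r ^ 2 + RR ^ 2) / (2 * sqrt (lens_disc RR d r))))
      / lens_disc RR d r)).
- exact (is_derive_minus _ _ r _ _ is_derive_acos_cos_half_angle dB).
- unfold half_arc_derive2, minus, plus, opp; simpl.
  field_simplify; [| lra | lra].
  rewrite pow2_sqrt by lra; unfold lens_disc in *; field; lra.
Qed.

Lemma half_arc_derive2_nonpos :
  0 <= d ^ 2 + r ^ 2 - RR ^ 2 -> half_arc_derive2 RR d r <= 0.
Proof.
intros K_ge0; pose proof lens_r_gt0; pose proof lens_disc_gt0.
assert (sqrt_gt0 : 0 < sqrt (lens_disc RR d r)) by (apply sqrt_lt_R0; lra).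
unfold half_arc_derive2; cbv zeta; rewrite Rdiv_opp_l.
set (K := d ^ 2 + r ^ 2 - RR ^ 2) in *.
assert (0 <= (K * (K - 2 * r ^ 2) ^ 2 + 2 * r ^ 2 * lens_disc RR d r)
             / (r * lens_disc RR d r * sqrt (lens_disc RR d r))).
{ apply Rdiv_le_0_compat; [| apply Rmult_lt_0_compat; nra].
  pose proof (pow2_ge_0 (K - 2 * r ^ 2)); nra. }
lra.
Qed.

End OpenLens.

Lemma continuity_pt_half_arc RR d r : 0 < RR -> 0 < d ->
  d - RR <= r <= d + RR -> (r = 0 \/ RR - d < r) -> continuity_pt (half_arc RR d) r.
Proof.
intros RR_gt0 d_gt0 r_range [->|lo].
- (* [acos] is bounded by [PI], so [half_arc] vanishes linearly at 0. *)
  intros eps eps_gt0; pose proof PI_RGT_0.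
  exists (eps / PI); split; [apply Rdiv_lt_0_compat; lra|].
  intros y [_ Hy]; simpl in *; unfold R_dist, half_arc in *.
  rewrite Rmult_0_l, Rminus_0_r, Rabs_mult in *.
  pose proof (acos_bound (cos_half_angle RR d y)).
  rewrite (Rabs_pos_eq (acos _)) by lra.
  apply Rlt_div_r in Hy; [|lra]; pose proof (Rabs_pos y); nra.
- assert (r_gt0 : 0 < r) by lra.
  apply (continuity_pt_mult (fun t => t)); [apply continuity_pt_id|].
  apply (continuity_pt_comp (cos_half_angle RR d) acos).
  + apply derivable_continuous_pt; exists ((r ^ 2 - d ^ 2 + RR ^ 2) / (2 * d * r ^ 2)).
    apply is_derive_Reals; unfold cos_half_angle; auto_derive; [nra | field; lra].
  + apply continuity_pt_acos; unfold cos_half_angle; assert (0 < 2 * d * r) by nra; split.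
    * apply Rlt_div_r; nra.
    * apply Rle_div_l; nra.
Qed.

Lemma f_prof_eq_half_arc RR d r : 0 < RR -> 0 < d ->
  d - RR <= r <= d + RR -> (r = 0 \/ RR - d < r) ->
  f_prof RR d r = 2 / (PI * RR ^ 2) * half_arc RR d r.
Proof.
intros RR_gt0 d_gt0 r_range r_lens; unfold f_prof, half_arc.
destruct (Rle_dec r (RR - d)).
- destruct r_lens as [->|]; [unfold Rdiv; ring | lra].
- destruct (Rlt_dec (RR + d) r); [lra|].
  destruct (Rlt_dec r (d - RR)); [lra|].
  unfold cos_half_angle, Rdiv; ring.
Qed.

(* The hypothesis [RR ^ 2 <= d ^ 2 + a ^ 2] is [K >= 0] on the interval. *)
Lemma f_prof_concave_on_interval RR d a : 0 < RR -> 0 < d -> 0 <= a -> d - RR <= a ->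
  RR ^ 2 <= d ^ 2 + a ^ 2 -> concave_on (fun r => a <= r <= d + RR) (f_prof RR d).
Proof.
intros RR_gt0 d_gt0 a_ge0 a_lo a_far.
assert (far : forall r, a <= r -> 0 < r -> RR - d < r) by (intros; nra).
assert (closed_lens : forall r, a <= r <= d + RR -> r = 0 \/ RR - d < r).
{ intros r Hr; destruct (Req_dec r 0); [left | right; apply far]; lra. }
assert (open_lens : forall r, a < r < d + RR -> Rabs (d - RR) < r < d + RR).
{ intros r Hr; pose proof (far r); split; [apply Rabs_def1|]; lra. }
apply concave_on_interval_ext with (h := fun r => 2 / (PI * RR ^ 2) * half_arc RR d r).
{ intros r Hr; apply f_prof_eq_half_arc; auto; lra. }
apply concave_on_scal.
{ pose proof PI_RGT_0; apply Rlt_le, Rdiv_lt_0_compat; [lra | apply Rmult_lt_0_compat; nra]. }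
apply (concave_on_interval _ (half_arc_derive RR d)).
- intros r Hr; apply continuity_pt_half_arc; auto; lra.
- intros r Hr; apply is_derive_half_arc; auto.
- apply (nonincreasing_of_derive_nonpos _ (half_arc_derive2 RR d)).
  + intros r Hr; apply is_derive_half_arc_derive; auto.
  + intros r Hr; apply half_arc_derive2_nonpos; auto; nra.
Qed.

Theorem propositionB1 (RR : R) (hR : 0 < RR) :
  (forall d : R, 0 <= d ->
     concave_on (fun r => prof_support RR d r /\ RR <= r) (f_prof RR d)) /\
  (forall d : R, RR <= d ->
     concave_on (prof_support RR d) (f_prof RR d)).
Proof.
split.
- intros d d_ge0; destruct (Req_dec d 0) as [->|].
  { apply (concave_on_point _ _ RR); intros r [[_ [lo hi]] ge]; lra. }
  pose proof (Rmax_l RR (d - RR)); pose proof (Rmax_r RR (d - RR)).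
  apply (concave_on_subset (fun r => Rmax RR (d - RR) <= r <= d + RR)).
  + intros r [[_ [lo hi]] ge]; split; [apply Rmax_lub|]; lra.
  + apply f_prof_concave_on_interval; nra.
- intros d d_ge.
  apply (concave_on_subset (fun r => d - RR <= r <= d + RR)).
  + intros r [_ range]; exact range.
  + apply f_prof_concave_on_interval; nra.
Qed.
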